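(* In the setting of the context, let $n$ be an iteration index with $R_n=\|Ax_n-y\|\neq0$. Then there exist $t\in\mathbb{R}^{N_n}$ and $S_n>0$ with $h_n(t)\le h_n(0)-S_n$; equivalently, for every $z\in M$ the next iterate satisfies $D_p(x_{n+1},z)\le D_p(x_n,z)-S_n$.
   Context: $X$ is a real smooth, uniformly convex Banach space, $Y$ a real Banach space, $A:X\to Y$ bounded linear with adjoint $A^*$, $y\in\mathcal{R}(A)$, $M=\{x:Ax=y\}$. Fix $p,r\in(1,\infty)$, $p^*=p/(p-1)$. $J_p:X\to X^*$ is the duality mapping with gauge $t^{p-1}$ ($\langle J_p(x),x\rangle=\|x\|^p$, $\|J_p(x)\|=\|x\|^{p-1}$), $J_{p^*}:X^*\to X$ that of $X^*$ with gauge $t^{p^*-1}$ (inverse of $J_p$), $J_r^Y$ a single-valued selection of the duality mapping of $Y$ with gauge $t^{r-1}$. Bregman distance: $D_p(x,z)=\tfrac1{p^*}\|x\|^p-\langle J_p(x),z\rangle+\tfrac1p\|z\|^p$. Method: choose $x_0$ with $J_p(x_0)\in\overline{\mathcal{R}(A^* )}$, fix $N\in\mathbb{N}$, $N_n=\min(N,n+1)$. For $n=0,1,\dots$: $w_n=Ax_n-y$, $R_n=\|w_n\|$; stop if $R_n=0$. Else $u_n^*=J_r^Y(w_n)$, $u_n=A^*u_n^*$. Let $s_n$ minimize $s\mapsto\|u_n-\sum_{i=1}^{N_{n-1}}s_iv_{n-1,i}\|^{p^*}$ (empty sum for $n=0$), set $v_{n,N_n}=u_n-\sum_k s_{n,k}v_{n-1,k}$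 with precursor $w^*_{n,N_n}=u_n^*-\sum_k s_{n,k}w^*_{n-1,k}$; $v_{n,1},\dots,v_{n,N_n-1}$ (with precursors) are the last $N_n-1$ entries of the previous list, in order. Offsets $\beta_{n,k}=\langle w^*_{n,k},y\rangle$. $h_n(t)=\tfrac1{p^*}\|J_p(x_n)-\sum_{k=1}^{N_n}t_kv_{n,k}\|^{p^*}+\sum_k t_k\beta_{n,k}$; $t_n$ minimizes $h_n$ and $x_{n+1}=J_{p^*}(J_p(x_n)-\sum_k t_{n,k}v_{n,k})$. *)

From mathcomp Require Import all_boot all_order all_algebra.
From mathcomp Require Import all_classical all_reals all_analysis.
Import Order.TTheory GRing.Theory Num.Theory.
Import numFieldNormedType.Exports.

Set Implicit Arguments.
Unset Strict Implicit.
Unset Printing Implicit Defensive.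

Local Open Scope classical_set_scope.
Local Open Scope ring_scope.

Section Setting.
Context {R : realType}.

Definition conj_exp (p : R) : R := p / (p - 1).

(* [pair : Xs -> X -> R] identifies the normed space Xs isometrically with the
   (topological) dual X^* of X: pair is bilinear, the norm of Xs is the dual
   norm, and every continuous linear functional on X is represented. *)
Record dual_pair (X Xs : normedModType R) (pair : Xs -> X -> R) : Prop := {
  dp_linl : forall (a : R) (f g : Xs) (x : X),
      pair (a *: f + g) x = a * pair f x + pair g x;
  dp_linr : forall (f : Xs) (a : R) (x z : X),
      pair f (a *: x + z) = a * pair f x + pair f z;
  dp_norm : forall f : Xs,
      `|f| = sup [set pair f x | x in [set x : X | `|x| <= 1]];
  dp_onto : forall phi : X -> R,
      (forall (a : R) (x z : X), phi (a *: x + z) = a * phi x + phi z) ->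
      continuous phi -> exists f : Xs, forall x, pair f x = phi x }.

Definition uniformly_convex (X : normedModType R) : Prop :=
  forall eps : R, 0 < eps <= 2 ->
  exists2 delta : R, 0 < delta &
    forall x z : X, `|x| = 1 -> `|z| = 1 -> eps <= `|x - z| ->
      `|2^-1 *: (x + z)| <= 1 - delta.

Definition smooth_wrt (X Xs : normedModType R) (pair : Xs -> X -> R) : Prop :=
  forall x : X, x != 0 -> forall f g : Xs,
    `|f| = 1 -> `|g| = 1 -> pair f x = `|x| -> pair g x = `|x| -> f = g.

(* J : E -> F is (a selection of) the duality mapping with gauge t^(q-1),
   w.r.t. the pairing pr between F and E *)
Definition duality_map (E F : normedModType R) (pr : F -> E -> R) (q : R)
  (J : E -> F) : Prop :=
  forall e : E, pr (J e) e = `|e| `^ q /\ `|J e| = `|e| `^ (q - 1).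

Definition lincomb (V : lmodType R) (c : seq R) (v : seq V) : V :=
  \sum_(i < size v) c`_i *: v`_i.

Definition Nn (N n : nat) : nat := minn N n.+1.

Definition shift_list (T : Type) (N n : nat) (prev : seq T) (new : T) : seq T :=
  drop (size prev - (Nn N n).-1) prev ++ [:: new].

Section Method.
Variables (X Y Xs Ys : normedModType R).
Variables (pairX : Xs -> X -> R) (pairY : Ys -> Y -> R).
Variables (A : X -> Y) (Astar : Ys -> Xs) (y : Y) (p : R) (N : nat).
Variables (Jp : X -> Xs) (Jps : Xs -> X) (Jr : Y -> Ys).

Definition Dp (x z : X) : R :=
  (conj_exp p)^-1 * `|x| `^ p - pairX (Jp x) z + p^-1 * `|z| `^ p.

(* h_n(t) for the current iterate xn and lists Vn (directions), Wn (precursors) *)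
Definition hfun (xn : X) (Vn : seq Xs) (Wn : seq Ys) (c : seq R) : R :=
  (conj_exp p)^-1 * `|Jp xn - lincomb c Vn| `^ conj_exp p
  + \sum_(k < size Wn) c`_k * pairY Wn`_k y.

(* The iterates x_0..x_{n+1}, the lists (v_{m,k})_k, (w*_{m,k})_k and the
   minimizers s_m, t_m of the method, for all steps m = 0..n, none of which
   stopped (R_m <> 0). *)
Definition is_run (x : nat -> X) (V : nat -> seq Xs) (W : nat -> seq Ys)
  (s t : nat -> seq R) (n : nat) : Prop :=
  closure (range Astar) (Jp (x 0%N)) /\
  forall m : nat, (m <= n)%N ->
    let wm := A (x m) - y in
    let us := Jr wm in
    let u := Astar us in
    let pV := if m is m'.+1 then V m' else [::] in
    let pW := if m is m'.+1 then W m' else [::] in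
    [/\ wm != 0,
        size (s m) = size pV,
        (forall c : seq R, size c = size pV ->
           `|u - lincomb (s m) pV| `^ conj_exp p
           <= `|u - lincomb c pV| `^ conj_exp p),
        V m = shift_list N m pV (u - lincomb (s m) pV)
      & W m = shift_list N m pW (us - lincomb (s m) pW)] /\
    [/\ size (t m) = Nn N m,
        (forall c : seq R, size c = Nn N m ->
           hfun (x m) (V m) (W m) (t m) <= hfun (x m) (V m) (W m) c)
      & x m.+1 = Jps (Jp (x m) - lincomb (t m) (V m))].

End Method.
End Setting.

From mathcomp Require Import all_boot all_order all_algebra.
From mathcomp Require Import all_classical all_reals all_analysis.
From mathcomp Require Import ring lra zify.
Import Order.TTheory GRing.Theory Num.Theory.
Import numFieldNormedType.Exports.
Local Open Scope classical_set_scope.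
Local Open Scope ring_scope.

(* The newest direction [v = v_{n,N_n}] has precursor
   [w* = J_r(A x_n - y) - sum_k s_{n,k} w*_{n-1,k}], so
   [<v, x_n> - beta_{n,N_n} = <w*, A x_n - y> = R_n^r > 0]: the older terms vanish because
   the first-order conditions of the minimality of [t_{n-1}] read
   [<v_{n-1,k}, x_n> = beta_{n-1,k}].
   Since [t |-> 1/p* |zeta - t v|^{p*}] has slope [- <v, J_{p*} zeta>] at [0] (subgradient
   inequality plus norm-to-norm continuity of [J_{p*}], which uniform convexity provides),
   a small step along the last coordinate brings [h_n] strictly below [h_n(0)], and the
   minimiser [t_n] does at least as well: [S_n = h_n(0) - h_n(t_n) > 0].
   For [z] in [M] one has [beta_{n,k} = <v_{n,k}, z>], which turns
   [D_p(x_{n+1}, z) - D_p(x_n, z)] into [h_n(t_n) - h_n(0)]. *)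

Section DualPair.
Context {R : realType} {X Xs : normedModType R} {pair : Xs -> X -> R}.
Hypothesis dp : dual_pair pair.

Lemma pair0l x : pair 0 x = 0.
Proof.
have := dp_linl dp 1 0 0 x; rewrite scale1r addr0 mul1r => /eqP.
by rewrite -subr_eq subrr eq_sym => /eqP.
Qed.

Lemma pairZl a f x : pair (a *: f) x = a * pair f x.
Proof. by have := dp_linl dp a f 0 x; rewrite addr0 pair0l addr0. Qed.

Lemma pairDl f g x : pair (f + g) x = pair f x + pair g x.
Proof. by have := dp_linl dp 1 f g x; rewrite scale1r mul1r. Qed.

Lemma pairNl f x : pair (- f) x = - pair f x.
Proof. by rewrite -scaleN1r pairZl mulN1r. Qed.

Lemma pairBl f g x : pair (f - g) x = pair f x - pair g x.
Proof. by rewrite pairDl pairNl. Qed.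

Lemma pair0r f : pair f 0 = 0.
Proof.
have := dp_linr dp f 1 0 0; rewrite scale1r addr0 mul1r => /eqP.
by rewrite -subr_eq subrr eq_sym => /eqP.
Qed.

Lemma pairZr f a x : pair f (a *: x) = a * pair f x.
Proof. by have := dp_linr dp f a x 0; rewrite addr0 pair0r addr0. Qed.

Lemma pairDr f x z : pair f (x + z) = pair f x + pair f z.
Proof. by have := dp_linr dp f 1 x z; rewrite scale1r mul1r. Qed.

Lemma pairBr f x z : pair f (x - z) = pair f x - pair f z.
Proof. by rewrite pairDr -scaleN1r pairZr mulN1r. Qed.

Lemma pair_lincomb c (vs : seq Xs) x :
  pair (lincomb c vs) x = \sum_(i < size vs) c`_i * pair vs`_i x.
Proof.
rewrite /lincomb; elim/big_rec2: _ => [|i a f _ <-]; first exact: pair0l.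
by rewrite pairDl pairZl.
Qed.

Lemma pair_le f x : pair f x <= `|f| * `|x|.
Proof.
have [->|x0] := eqVneq x 0; first by rewrite pair0r normr0 mulr0.
have nx : 0 < `|x| by rewrite normr_gt0.
suff : pair f (`|x|^-1 *: x) <= `|f|.
  by rewrite pairZr -(ler_pM2l nx) mulrA divff ?gt_eqF // mul1r mulrC.
set S := [set pair f z | z in [set z : X | `|z| <= 1]].
have Sx : S (pair f (`|x|^-1 *: x)).
  by exists (`|x|^-1 *: x) => //=; rewrite normrZ normfV normr_id mulVf ?gt_eqF.
have [ubS|nubS] := pselect (has_ubound S).
  rewrite (dp_norm dp); apply: sup_upper_bound => //.
  by split => //; exists (pair f (`|x|^-1 *: x)).
have /normr0_eq0 -> : `|f| = 0 by rewrite (dp_norm dp); apply: sup_out => -[].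
by rewrite pair0l normr0.
Qed.

Lemma norm_pair_le f x : `|pair f x| <= `|f| * `|x|.
Proof. by rewrite ler_norml pair_le andbT lerNl -pairNl -(normrN f) pair_le. Qed.

End DualPair.

Section ConjugateExponent.
Context {R : realType} {p : R}.
Hypothesis p_gt1 : 1 < p.
Let q := conj_exp p.

Let p_sub1_neq0 : p - 1 != 0. Proof. by rewrite subr_eq0 gt_eqF. Qed.

Lemma conj_exp_gt1 : 1 < q.
Proof.
have -> : q = 1 + (p - 1)^-1 by rewrite /q /conj_exp; field.
by rewrite ltrDl invr_gt0 subr_gt0.
Qed.

Lemma conj_exp_invD : p^-1 + q^-1 = 1.
Proof. by rewrite /q /conj_exp; field; rewrite p_sub1_neq0 gt_eqF // (lt_trans ltr01). Qed.

Lemma powR_sub1_conjK t : 0 <= t -> (t `^ (p - 1)) `^ (q - 1) = t.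
Proof. by move=> t0; rewrite -powRrM [_ * _](_ : _ = 1) ?powRr1 // /q /conj_exp; field. Qed.

Lemma powR_conj_sub1K t : 0 <= t -> (t `^ (q - 1)) `^ (p - 1) = t.
Proof. by move=> t0; rewrite -powRrM [_ * _](_ : _ = 1) ?powRr1 // /q /conj_exp; field. Qed.

Lemma powR_conj_sub1 t : (t `^ (q - 1)) `^ p = t `^ q.
Proof. by rewrite -powRrM; congr (_ `^ _); rewrite /q /conj_exp; field. Qed.

Lemma powR_sub1_conj t : (t `^ (p - 1)) `^ q = t `^ p.
Proof. by rewrite -powRrM; congr (_ `^ _); rewrite /q /conj_exp; field. Qed.

End ConjugateExponent.

Section UniformConvexity.
Context {R : realType} {X : normedModType R}.
Hypothesis uc : uniformly_convex X.

Lemma uniformly_convex_sphere (L eps : R) : 0 < L -> 0 < eps <= 2 ->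
  exists2 d : R, 0 < d & forall a b : X, `|a| = L -> `|b| = L ->
    eps * L <= `|a - b| -> `|a + b| <= 2 * L * (1 - d).
Proof.
move=> L0 eps02; have [d d0 ucd] := uc _ eps02; exists d => // a b na nb ab.
have normV (c : X) : `|c| = L -> `|L^-1 *: c| = 1.
  by move=> nc; rewrite normrZ nc ger0_norm ?invr_ge0 ?ltW // mulVf ?gt_eqF.
have epsn : eps <= `|L^-1 *: a - L^-1 *: b|.
  by rewrite -scalerBr normrZ normfV (ger0_norm (ltW L0)) ler_pdivlMl // mulrC.
have := ucd _ _ (normV a na) (normV b nb) epsn.
have L2 : 0 < 2 * L by rewrite mulr_gt0.
by rewrite -scalerDr scalerA normrZ -invfM normfV (gtr0_norm L2) ler_pdivrMl.
Qed.

Lemma uniformly_convex_midpoint_eq (a b : X) :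
  `|a| = `|b| -> 2 * `|a| <= `|a + b| -> a = b.
Proof.
move=> nab hab; have [a0|a0] := eqVneq a 0.
  by move: nab; rewrite a0 normr0 => /esym/normr0_eq0 ->.
have L0 : 0 < `|a| by rewrite normr_gt0.
apply/eqP; rewrite -subr_eq0; apply: contraTT hab => ab0.
have d0 : 0 < `|a - b| by rewrite normr_gt0.
set eps := Num.min (`|a - b| / `|a|) 2.
have eps02 : 0 < eps <= 2 by rewrite lt_min ge_min lexx orbT andbT divr_gt0 // ltr0n.
have [d d0' ucd] := uniformly_convex_sphere _ _ L0 eps02.
have epsab : eps * `|a| <= `|a - b|.
  by rewrite -ler_pdivlMr // ge_min lexx.
have := ucd a b erefl (esym nab) epsab; rewrite -ltNge => ab.
apply: le_lt_trans ab _; rewrite gtr_pMr ?mulr_gt0 //; lra.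
Qed.

End UniformConvexity.

Section DualityMap.
Context {R : realType} {E F : normedModType R} {pair : F -> E -> R} {q : R}.
Context {J : E -> F}.
Hypothesis hJ : duality_map pair q J.

Lemma duality_map_pair e : pair (J e) e = `|e| `^ q.
Proof. by case: (hJ e). Qed.

Lemma duality_map_norm e : `|J e| = `|e| `^ (q - 1).
Proof. by case: (hJ e). Qed.

Lemma duality_map0 : q != 1 -> J 0 = 0.
Proof. by move=> q1; apply/normr0_eq0; rewrite duality_map_norm normr0 powR0 ?subr_eq0. Qed.

End DualityMap.

Section InverseDualityMaps.
Context {R : realType} {X Xs : normedModType R} {pair : Xs -> X -> R}.
Context {p : R} {Jp : X -> Xs} {Jps : Xs -> X}.
Hypotheses (dp : dual_pair pair) (p_gt1 : 1 < p).
Hypothesis hJp : duality_map pair p Jp.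
Hypothesis hJps : duality_map (fun (v : X) (f : Xs) => pair f v) (conj_exp p) Jps.
Let q := conj_exp p.

Let Jp0 : Jp 0 = 0. Proof. by rewrite (duality_map0 hJp) // gt_eqF. Qed.
Let Jps0 : Jps 0 = 0.
Proof. by rewrite (duality_map0 hJps) // gt_eqF // conj_exp_gt1. Qed.

Lemma JpsK : uniformly_convex X -> cancel Jp Jps.
Proof.
move=> uc x; have [->|x0] := eqVneq x 0; first by rewrite Jp0 Jps0.
have nx : 0 < `|x| by rewrite normr_gt0.
have nJpx : `|Jp x| = `|x| `^ (p - 1) := duality_map_norm hJp x.
have nz : `|Jps (Jp x)| = `|x|.
  by rewrite (duality_map_norm hJps) nJpx powR_sub1_conjK.
apply: esym; apply: (uniformly_convex_midpoint_eq uc); first by rewrite nz.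
(* [Jp x] norms both [x] and [Jps (Jp x)], hence also their sum. *)
have := pair_le dp (Jp x) (x + Jps (Jp x)).
rewrite (pairDr dp) (duality_map_pair hJps) (duality_map_pair hJp) nJpx.
rewrite powR_sub1_conj // -[`|x| `^ p](mulr_powRB1 (ltW nx)) ?(lt_trans ltr01) //.
have : 0 < `|x| `^ (p - 1) by rewrite powR_gt0.
nra.
Qed.

Lemma Jps_norming e : pair e (Jps e) = `|e| * `|Jps e|.
Proof.
rewrite (duality_map_pair hJps) (duality_map_norm hJps) mulr_powRB1 //.
exact: lt_trans ltr01 (conj_exp_gt1 p_gt1).
Qed.

Lemma JpK : smooth_wrt pair -> cancel Jps Jp.
Proof.
move=> sm e; have [->|e0] := eqVneq e 0; first by rewrite Jps0 Jp0.
have ne : 0 < `|e| by rewrite normr_gt0.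
set x := Jps e.
have q_gt1 : 1 < q := conj_exp_gt1 p_gt1.
have nx : `|x| = `|e| `^ (q - 1) := duality_map_norm hJps e.
have x0 : x != 0 by rewrite -normr_gt0 nx powR_gt0.
have nJpx : `|Jp x| = `|e| by rewrite (duality_map_norm hJp) nx powR_conj_sub1K ?ltW.
have normV (f : Xs) : `|f| = `|e| -> `| `|e|^-1 *: f| = 1.
  by move=> nf; rewrite normrZ nf normfV normr_id mulVf ?gt_eqF.
have ie : `|e|^-1 != 0 by rewrite invr_eq0 gt_eqF.
apply: (scalerI ie); apply: (sm x x0 _ _ (normV _ nJpx) (normV e erefl)).
  rewrite (pairZl dp) (duality_map_pair hJp) nx powR_conj_sub1 //.
  by rewrite -[`|e| `^ q](mulr_powRB1 (ltW ne)) ?(lt_trans ltr01) // mulKf ?gt_eqF.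
rewrite (pairZl dp) (duality_map_pair hJps) nx.
by rewrite -[`|e| `^ q](mulr_powRB1 (ltW ne)) ?(lt_trans ltr01) // mulKf ?gt_eqF.
Qed.

Lemma Jps_subgradient (eta zeta : Xs) :
  pair eta (Jps zeta) - `|zeta| `^ q <= q^-1 * `|eta| `^ q - q^-1 * `|zeta| `^ q.
Proof.
have q_gt1 : 1 < q := conj_exp_gt1 p_gt1.
have := pair_le dp eta (Jps zeta); rewrite (duality_map_norm hJps).
have := conjugate_powR (normr_ge0 eta) (powR_ge0 `|zeta| (q - 1))
  (lt_trans ltr01 q_gt1) (lt_trans ltr01 p_gt1) (etrans (addrC _ _) (conj_exp_invD p_gt1)).
have -> : p^-1 = 1 - q^-1 by rewrite -(conj_exp_invD p_gt1) addrK.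
rewrite powR_conj_sub1 // /q; lra.
Qed.

End InverseDualityMaps.

Lemma powR_continuous_at {R : realType} (r Z eps : R) : 0 < Z -> 0 < eps ->
  exists2 d, 0 < d & forall t, `|t - Z| < d -> `|t `^ r - Z `^ r| < eps.
Proof.
move=> Z0 e0.
have cZ : {for Z, continuous (@powR R ^~ r)}.
  apply: differentiable_continuous; apply/derivable1_diffP.
  by apply: derivable_powR; rewrite in_itv /= Z0.
have [d /= d0 near_Z] := iffLR (nbhs_normP _ _) (cvgr_distC_lt _ _ cZ _ e0).
by exists d => // t tZ; apply: near_Z; rewrite /= distrC.
Qed.

Section JpsContinuity.
Context {R : realType} {X Xs : normedModType R} {pair : Xs -> X -> R}.
Context {p : R} {Jps : Xs -> X}.
Hypotheses (dp : dual_pair pair) (uc : uniformly_convex X) (p_gt1 : 1 < p).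
Hypothesis hJps : duality_map (fun (v : X) (f : Xs) => pair f v) (conj_exp p) Jps.
Let q := conj_exp p.

Lemma almost_norming_close (zeta : Xs) (x : X) (eps : R) :
  zeta != 0 -> 0 < `|x| -> pair zeta x = `|zeta| * `|x| -> 0 < eps ->
  exists2 d, 0 < d & forall a : X, `|a| = `|x| ->
    (1 - d) * (`|zeta| * `|x|) <= pair zeta a -> `|a - x| < eps * `|x|.
Proof.
move=> zeta0 nx zx e0; have nzeta : 0 < `|zeta| by rewrite normr_gt0.
have e02 : 0 < Num.min eps 2 <= 2 by rewrite lt_min e0 ltr0n ge_min lexx orbT.
have [d d0 ucd] := uniformly_convex_sphere uc _ _ nx e02.
exists d => // a na za; apply: (@lt_le_trans _ _ (Num.min eps 2 * `|x|)); last first.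
  by rewrite ler_pM2r // ge_min lexx.
rewrite ltNge; apply/negP => /(ucd a x na erefl) /(ler_wpM2l (ltW nzeta)).
have := pair_le dp zeta (a + x); rewrite (pairDr dp) zx.
have : 0 < `|zeta| * `|x| by rewrite mulr_gt0.
move: za; nra.
Qed.

Lemma Jps_continuous0 (eps : R) : 0 < eps ->
  exists2 del, 0 < del & forall z, `|z - 0| < del -> `|Jps z - Jps 0| < eps.
Proof.
move=> e0; have qm1 : 0 < q - 1 by rewrite subr_gt0 conj_exp_gt1.
exists (eps `^ (q - 1)^-1); first by rewrite powR_gt0.
move=> z; rewrite (duality_map0 hJps) ?gt_eqF ?conj_exp_gt1 //.
rewrite !subr0 (duality_map_norm hJps) => hz.
have := gt0_ltr_powR qm1 (normr_ge0 z : `|z| \in Num.nneg)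
  (powR_ge0 _ _ : eps `^ (q - 1)^-1 \in Num.nneg) hz.
by rewrite -powRrM mulVf ?gt_eqF // powRr1 // ltW.
Qed.

(* [Jps z], rescaled to the norm of [Jps zeta], almost norms [zeta], hence is close
   to [Jps zeta] by uniform convexity; the rescaling factor tends to 1. *)
Lemma Jps_continuous (zeta : Xs) (eps : R) : 0 < eps ->
  exists2 del, 0 < del & forall z, `|z - zeta| < del -> `|Jps z - Jps zeta| < eps.
Proof.
have [->|zeta0 e0] := eqVneq zeta 0; first exact: Jps_continuous0.
set Z := `|zeta|; set x := Jps zeta; set L := `|x|.
have Z0 : 0 < Z by rewrite normr_gt0.
have L0 : 0 < L by rewrite /L (duality_map_norm hJps) powR_gt0.
have [d1 d1_0 close] := almost_norming_close _ _ _ zeta0 L0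
  (Jps_norming p_gt1 hJps zeta) (divr_gt0 e0 (mulr_gt0 (ltr0n _ 2) L0)).
have [d2 d2_0 near_Z] := powR_continuous_at (q - 1) _ _ Z0 (divr_gt0 e0 (ltr0n _ 2)).
exists (Num.min Z (Num.min (Z * d1 / 2) d2)).
  by rewrite !lt_min Z0 d2_0 !mulr_gt0.
move=> z; set d := `|z - zeta|; rewrite !lt_min => /and3P[dZ dZd1 dd2].
set N := `|z|; set x' := Jps z; set L' := `|x'|.
have NZ : `|N - Z| <= d := ler_dist_dist z zeta.
have N0 : 0 < N by move: NZ; rewrite ler_norml; lra.
have L'0 : 0 < L' by rewrite /L' (duality_map_norm hJps) powR_gt0.
pose a := (L / L') *: x'.
have na : `|a| = L by rewrite normrZ ger0_norm ?divr_ge0 ?ltW // mulfVK ?gt_eqF.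
have za : (1 - d1) * (Z * L) <= pair zeta a.
  have : `|pair (z - zeta) x'| <= d * L' by rewrite norm_pair_le.
  rewrite /a (pairZr dp) (pairBl dp) (Jps_norming p_gt1 hJps) -/x' -/L' -/N ler_norml.
  move=> /andP[_ ?]; have -> : (1 - d1) * (Z * L) = L / L' * ((1 - d1) * Z * L').
    by field; rewrite gt_eqF.
  rewrite ler_pM2l ?divr_gt0 //; move: NZ; rewrite ler_norml; nra.
have ax : `|a - x| < eps / 2.
  have -> : eps / 2 = eps / (2 * L) * L by field; rewrite gt_eqF.
  exact: close.
have x'a : `|x' - a| < eps / 2.
  have -> : x' - a = ((L' - L) / L') *: x'.
    by rewrite /a -{1}(scale1r x') -scalerBl; congr (_ *: _); field; rewrite gt_eqF.
  rewrite normrZ normrM normfV (gtr0_norm L'0) mulfVK ?gt_eqF //.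
  rewrite /L' /L !(duality_map_norm hJps); apply: near_Z.
  exact: le_lt_trans NZ dd2.
have := ler_distD a x' x; rewrite distrC; lra.
Qed.

Lemma norm_powR_descent (zeta v : Xs) (beta : R) : beta < pair v (Jps zeta) ->
  exists2 tau, 0 < tau &
    q^-1 * `|zeta - tau *: v| `^ q + tau * beta < q^-1 * `|zeta| `^ q.
Proof.
set g := pair v (Jps zeta) - beta; rewrite -subr_gt0 -/g => g0.
set M := `|v| + 1.
have M0 : 0 < M by rewrite ltr_pwDr.
have [del del0 near_zeta] := Jps_continuous zeta _ (divr_gt0 g0 M0).
exists (del / (2 * M)); first by rewrite !divr_gt0 ?mulr_gt0.
set tau := del / (2 * M); set zeta' := zeta - tau *: v.
have near : `|zeta' - zeta| < del.
  rewrite addrAC subrr add0r normrN normrZ gtr0_norm ?divr_gt0 ?mulr_gt0 //.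
  rewrite /tau -mulrA gtr_pMr // ltr_pdivrMl ?mulr_gt0 // mulr1 /M.
  by have := normr_ge0 v; lra.
have beta_lt : beta < pair v (Jps zeta').
  have := norm_pair_le dp v (Jps zeta' - Jps zeta).
  rewrite (pairBr dp) ler_norml => /andP[+ _].
  have : `|v| * `|Jps zeta' - Jps zeta| <= `|v| * (g / M).
    by rewrite ler_wpM2l // ltW // near_zeta.
  have : `|v| * (g / M) < g by rewrite mulrA ltr_pdivrMr // mulrC ltr_pM2l // ltrDl.
  rewrite /g; lra.
(* convexity at [zeta']: the decrease is at least [tau * pair v (Jps zeta')] *)
have := Jps_subgradient dp p_gt1 hJps zeta zeta'.
rewrite -{1}[zeta](subrK (tau *: v)) -/zeta' (pairDl dp) (pairZl dp).
rewrite (duality_map_pair hJps) -/q.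
have : tau * beta < tau * pair v (Jps zeta') by rewrite ltr_pM2l ?divr_gt0 ?mulr_gt0.
lra.
Qed.

End JpsContinuity.

Section LinearCombinations.
Context {R : realType} {V : lmodType R}.

Lemma sum_set_nth (c : seq R) (F : nat -> V) n k tau : (k < n)%N ->
  \sum_(i < n) (set_nth 0 c k (c`_k + tau))`_i *: F i =
  \sum_(i < n) c`_i *: F i + tau *: F k.
Proof.
move=> kn; rewrite (bigD1 (Ordinal kn)) // [in RHS](bigD1 (Ordinal kn)) //=.
rewrite nth_set_nth /= eqxx scalerDl addrAC.
congr (_ + _ + _); apply: eq_bigr => i ik; rewrite nth_set_nth /=.
by rewrite -(inj_eq val_inj) /= in ik; rewrite (negPf ik).
Qed.

Lemma lincomb_set_nth c (vs : seq V) k tau : (k < size vs)%N ->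
  lincomb (set_nth 0 c k (c`_k + tau)) vs = lincomb c vs + tau *: vs`_k.
Proof. exact: sum_set_nth. Qed.

Lemma lincomb_nseq0 n (vs : seq V) : lincomb (nseq n 0) vs = 0.
Proof. by rewrite /lincomb big1 // => i _; rewrite nth_nseq if_same scale0r. Qed.

End LinearCombinations.

Lemma size_shift_list (T : Type) N m (l : seq T) new : (0 < N)%N ->
  size l = (if m is m'.+1 then Nn N m' else 0%N) ->
  size (shift_list N m l new) = Nn N m.
Proof.
move=> N0 hl; rewrite /shift_list size_cat size_drop /= hl /Nn.
by case: m hl => [|m] _ /=; lia.
Qed.

Lemma nth_shift_list_last (T : Type) (x0 : T) N m (l : seq T) new : (0 < N)%N ->
  size l = (if m is m'.+1 then Nn N m' else 0%N) ->
  nth x0 (shift_list N m l new) (Nn N m).-1 = new.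
Proof.
move=> N0 hl; rewrite /shift_list nth_cat size_drop hl.
have -> : ((Nn N m).-1 - ((if m is m'.+1 then Nn N m' else 0) -
    ((if m is m'.+1 then Nn N m' else 0) - (Nn N m).-1)))%N = 0%N.
  by rewrite /Nn; case: m hl => [|m] _ /=; lia.
by rewrite ifN // /Nn; case: m hl => [|m] _ /=; lia.
Qed.

Lemma shift_list_rel (T1 T2 : Type) (P : T1 -> T2 -> Prop) (x1 : T1) (x2 : T2)
    N m (l1 : seq T1) (l2 : seq T2) new1 new2 :
  size l1 = size l2 -> P x1 x2 -> (forall k, P (nth x1 l1 k) (nth x2 l2 k)) ->
  P new1 new2 ->
  forall k, P (nth x1 (shift_list N m l1 new1) k) (nth x2 (shift_list N m l2 new2) k).
Proof.
move=> hs P0 Pl Pn k; rewrite /shift_list !nth_cat !size_drop hs.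
case: ifP => _; first by rewrite !nth_drop.
by case: (k - _)%N => [|j] //=; rewrite !nth_nil.
Qed.

Section DescentFunction.
Context {R : realType} {X Xs Y Ys : normedModType R}.
Context {pairX : Xs -> X -> R} {pairY : Ys -> Y -> R} {y : Y}.
Context {p : R} {Jp : X -> Xs} {Jps : Xs -> X}.
Hypotheses (dpX : dual_pair pairX) (p_gt1 : 1 < p).
Hypothesis hJps : duality_map (fun (v : X) (f : Xs) => pairX f v) (conj_exp p) Jps.
Let q := conj_exp p.
Let h := hfun pairY y p Jp.

Lemma hfun_set_nth xn (Vn : seq Xs) (Wn : seq Ys) c k tau :
  (k < size Vn)%N -> size Vn = size Wn ->
  h xn Vn Wn (set_nth 0 c k (c`_k + tau)) =
  q^-1 * `|(Jp xn - lincomb c Vn) - tau *: Vn`_k| `^ q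
  + (\sum_(i < size Wn) c`_i * pairY Wn`_i y + tau * pairY Wn`_k y).
Proof.
move=> kVn VWn; rewrite /h /hfun lincomb_set_nth // opprD addrA.
by congr (_ + _); rewrite -VWn (@sum_set_nth _ R^o c (fun i => pairY Wn`_i y)).
Qed.

Lemma hfun_improve xn (Vn : seq Xs) (Wn : seq Ys) c k :
  uniformly_convex X -> size Vn = size Wn -> size c = size Vn -> (k < size Vn)%N ->
  pairX Vn`_k (Jps (Jp xn - lincomb c Vn)) != pairY Wn`_k y ->
  exists2 c', size c' = size Vn & h xn Vn Wn c' < h xn Vn Wn c.
Proof.
move=> uc VWn cVn kVn.
set eta := Jp xn - lincomb c Vn; set beta := pairY Wn`_k y.
have size_set tau : size (set_nth 0 c k (c`_k + tau)) = size Vn.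
  by rewrite size_set_nth cVn; apply/maxn_idPr.
rewrite neq_lt => /orP[lt_v|gt_v].
- have lt_Nv : - beta < pairX (- Vn`_k) (Jps eta) by rewrite (pairNl dpX) ltrN2.
  have [tau tau0 desc] := norm_powR_descent dpX uc p_gt1 hJps _ _ _ lt_Nv.
  exists (set_nth 0 c k (c`_k + - tau)); first exact: size_set.
  rewrite hfun_set_nth //.
  by move: desc; rewrite scaleNr scalerN mulrN mulNr /h /hfun -/eta -/q -/beta; lra.
- have [tau tau0 desc] := norm_powR_descent dpX uc p_gt1 hJps _ _ _ gt_v.
  exists (set_nth 0 c k (c`_k + tau)); first exact: size_set.
  rewrite hfun_set_nth //.
  by move: desc; rewrite /h /hfun -/eta -/q -/beta; lra.
Qed.

Lemma hfun_argmin_stationary xn (Vn : seq Xs) (Wn : seq Ys) c :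
  uniformly_convex X -> size Vn = size Wn -> size c = size Vn ->
  (forall c', size c' = size Vn -> h xn Vn Wn c <= h xn Vn Wn c') ->
  forall k, (k < size Vn)%N -> pairX Vn`_k (Jps (Jp xn - lincomb c Vn)) = pairY Wn`_k y.
Proof.
move=> uc VWn cVn c_min k kVn; apply/eqP; apply: contraT.
move=> /(hfun_improve xn Vn Wn c k uc VWn cVn kVn) [c' /c_min].
by rewrite leNgt => /negP.
Qed.

Hypothesis hJp : duality_map pairX p Jp.

Lemma Dp_Jps_step xn z (Vn : seq Xs) (Wn : seq Ys) c :
  smooth_wrt pairX -> size Vn = size Wn ->
  (forall k, (k < size Vn)%N -> pairX Vn`_k z = pairY Wn`_k y) ->
  Dp pairX p Jp (Jps (Jp xn - lincomb c Vn)) z =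
  h xn Vn Wn c - pairX (Jp xn) z + p^-1 * `|z| `^ p.
Proof.
move=> sm VWn Vz; rewrite /Dp (JpK dpX p_gt1 hJp hJps sm) (duality_map_norm hJps).
rewrite powR_conj_sub1 // /h /hfun (pairBl dpX) (pair_lincomb dpX) -VWn.
rewrite (eq_bigr (fun i : 'I_(size Vn) => c`_i * pairY Wn`_i y)) => [|i _].
  by rewrite /q; lra.
by rewrite Vz.
Qed.

Lemma Dp_hfun_nseq0 xn z (Vn : seq Xs) (Wn : seq Ys) m :
  Dp pairX p Jp xn z = h xn Vn Wn (nseq m 0) - pairX (Jp xn) z + p^-1 * `|z| `^ p.
Proof.
rewrite /Dp /h /hfun lincomb_nseq0 subr0 big1 => [|i _]; last first.
  by rewrite nth_nseq if_same mul0r.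
by rewrite addr0 (duality_map_norm hJp) powR_sub1_conj.
Qed.

End DescentFunction.

Section Run.
Context {R : realType} {X Y Xs Ys : normedModType R}.
Context {pairX : Xs -> X -> R} {pairY : Ys -> Y -> R}.
Context {A : X -> Y} {Astar : Ys -> Xs} {y : Y} {p r : R} {N : nat}.
Context {Jp : X -> Xs} {Jps : Xs -> X} {Jr : Y -> Ys}.
Context {x : nat -> X} {V : nat -> seq Xs} {W : nat -> seq Ys} {s t : nat -> seq R}.
Context {n : nat}.
Hypotheses (dpX : dual_pair pairX) (dpY : dual_pair pairY).
Hypothesis adj : forall (u : Ys) (v : X), pairX (Astar u) v = pairY u (A v).
Hypotheses (uc : uniformly_convex X) (p_gt1 : 1 < p) (N_gt0 : (0 < N)%N).
Hypothesis hJp : duality_map pairX p Jp.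
Hypothesis hJps : duality_map (fun (v : X) (f : Xs) => pairX f v) (conj_exp p) Jps.
Hypothesis hJr : duality_map pairY r Jr.
Hypothesis run : is_run pairY A Astar y p N Jp Jps Jr x V W s t n.

Lemma shift_list_adjoint m (pV : seq Xs) (pW : seq Ys) (c : seq R) (u : Ys) :
  size pV = size pW -> (forall k v, pairX pV`_k v = pairY pW`_k (A v)) ->
  forall k v, pairX (shift_list N m pV (Astar u - lincomb c pV))`_k v =
              pairY (shift_list N m pW (u - lincomb c pW))`_k (A v).
Proof.
move=> VW rel k v.
apply: (@shift_list_rel _ _ (fun f w => pairX f v = pairY w (A v))) => //.
  by rewrite (pair0l dpX) (pair0l dpY).
rewrite (pairBl dpX) (pairBl dpY) adj (pair_lincomb dpX) (pair_lincomb dpY) VW.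
by congr (_ - _); apply: eq_bigr => i _; rewrite rel.
Qed.

Lemma run_adjoint m : (m <= n)%N ->
  [/\ size (V m) = Nn N m, size (W m) = Nn N m &
      forall k v, pairX (V m)`_k v = pairY (W m)`_k (A v)].
Proof.
elim: m => [|m IH] le_mn; have [[_ _ _ -> ->] _] := run.2 _ le_mn.
  split; [exact: size_shift_list.. |].
  by apply: shift_list_adjoint => // k v; rewrite !nth_nil (pair0l dpX) (pair0l dpY).
have [sV sW rel] := IH (ltnW le_mn).
by split; [exact: size_shift_list.. | apply: shift_list_adjoint; rewrite ?sV].
Qed.

Lemma run_stationary m : (m < n)%N ->
  forall k, (k < Nn N m)%N -> pairX (V m)`_k (x m.+1) = pairY (W m)`_k y.
Proof.
move=> lt_mn k kN; have [sV sW _] := run_adjoint m (ltnW lt_mn).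
have [_ [size_t t_min ->]] := run.2 _ (ltnW lt_mn).
by apply: (hfun_argmin_stationary dpX p_gt1 hJps); rewrite ?sV ?sW.
Qed.

Lemma run_residual_orthogonal m : (m <= n)%N ->
  let pW := if m is m'.+1 then W m' else [::] in
  size pW = (if m is m'.+1 then Nn N m' else 0%N) /\
  forall k, (k < size pW)%N -> pairY pW`_k (A (x m) - y) = 0.
Proof.
case: m => [|m] le_mn //=; have [_ sW rel] := run_adjoint m (ltnW le_mn).
split=> // k; rewrite sW => kN.
by rewrite (pairBr dpY) -rel run_stationary ?subrr.
Qed.

Lemma run_gap : pairY (W n)`_(Nn N n).-1 y < pairX (V n)`_(Nn N n).-1 (x n).
Proof.
have [_ _ rel] := run_adjoint n (leqnn n).
have [[res_neq0 _ _ _ Wn] _] := run.2 _ (leqnn n).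
have [size_pW orth] := run_residual_orthogonal n (leqnn n).
rewrite rel -subr_gt0 -(pairBr dpY) Wn nth_shift_list_last //.
rewrite (pairBl dpY) (pair_lincomb dpY) (duality_map_pair hJr) big1 => [|i _].
  by rewrite subr0 powR_gt0 // normr_gt0.
by rewrite orth ?mulr0.
Qed.

Lemma run_descent :
  hfun pairY y p Jp (x n) (V n) (W n) (t n) <
  hfun pairY y p Jp (x n) (V n) (W n) (nseq (Nn N n) 0).
Proof.
have [sV sW _] := run_adjoint n (leqnn n).
have [_ [_ t_min _]] := run.2 _ (leqnn n).
have last_lt : ((Nn N n).-1 < size (V n))%N by rewrite sV /Nn; lia.
have gap : pairX (V n)`_(Nn N n).-1 (Jps (Jp (x n) - lincomb (nseq (Nn N n) 0) (V n)))
    != pairY (W n)`_(Nn N n).-1 y.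
  by rewrite lincomb_nseq0 subr0 (JpsK dpX p_gt1 hJp hJps uc) gt_eqF // run_gap.
have [c' c'V lt_c'] := hfun_improve (pairY := pairY) dpX p_gt1 hJps (x n) (V n) (W n)
  (nseq (Nn N n) 0) (Nn N n).-1 uc (etrans sV (esym sW)) (etrans (size_nseq _ _) (esym sV))
  last_lt gap.
by apply: le_lt_trans (t_min c' _) lt_c'; rewrite c'V sV.
Qed.

End Run.

Theorem mainTheorem2 (R : realType)
  (X Y : completeNormedModType R) (Xs Ys : normedModType R)
  (pairX : Xs -> X -> R) (pairY : Ys -> Y -> R)
  (A : X -> Y) (Astar : Ys -> Xs) (y : Y) (p r : R) (N : nat)
  (Jp : X -> Xs) (Jps : Xs -> X) (Jr : Y -> Ys)
  (x : nat -> X) (V : nat -> seq Xs) (W : nat -> seq Ys) (s t : nat -> seq R)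
  (n : nat) :
  dual_pair pairX -> dual_pair pairY ->
  uniformly_convex X -> smooth_wrt pairX ->
  (forall (a : R) (u v : X), A (a *: u + v) = a *: A u + A v) ->
  continuous A ->
  (forall (u : Ys) (v : X), pairX (Astar u) v = pairY u (A v)) ->
  (exists x0 : X, A x0 = y) ->
  1 < p -> 1 < r -> (0 < N)%N ->
  duality_map pairX p Jp ->
  duality_map (fun (v : X) (f : Xs) => pairX f v) (conj_exp p) Jps ->
  duality_map pairY r Jr ->
  is_run pairY A Astar y p N Jp Jps Jr x V W s t n ->
  exists tt : seq R, size tt = Nn N n /\
  exists S : R, 0 < S /\
    hfun pairY y p Jp (x n) (V n) (W n) tt
      <= hfun pairY y p Jp (x n) (V n) (W n) (nseq (Nn N n) 0) - S /\
    (forall z : X, A z = y ->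
       Dp pairX p Jp (x n.+1) z <= Dp pairX p Jp (x n) z - S).
Proof.
move=> dpX dpY uc sm _ _ adj _ p_gt1 _ N_gt0 hJp hJps hJr run.
have [sV sW rel] := run_adjoint dpX dpY adj N_gt0 run n (leqnn n).
have [_ [size_t _ x_next]] := run.2 n (leqnn n).
have descent := run_descent dpX dpY adj uc p_gt1 N_gt0 hJp hJps hJr run.
set h := hfun pairY y p Jp (x n) (V n) (W n) in descent *.
exists (t n); split => //; exists (h (nseq (Nn N n) 0) - h (t n)).
split; first by rewrite subr_gt0.
split; first by rewrite opprB addrC subrK.
move=> z Az; have Vz k : (k < size (V n))%N -> pairX (V n)`_k z = pairY (W n)`_k y.
  by rewrite rel Az.
rewrite x_next (Dp_Jps_step dpX p_gt1 hJps hJp _ _ _ _ _ sm (etrans sV (esym sW)) Vz).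
rewrite (Dp_hfun_nseq0 (pairY := pairY) (y := y) p_gt1 hJp _ _ (V n) (W n) (Nn N n)).
rewrite -/h; lra.
Qed.
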